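(* Let weights $a_0,\dots,a_n>0$ be given, let $\omega\in\mathbb{C}[x_0,\dots,x_n]$ be weighted homogeneous of degree $d$ (with $\deg x_i=a_i$) having $0$ as its unique critical point, and let $t=\gcd(d,\sum_i a_i)$. Assume $a_i\le d/2$ for all $i$, and let $I=\{i\in\{0,\dots,n\}: a_i=1\}$. If $|I|>\frac{2t}{d-2}$, then $\mathrm{Jac}(\omega_g)_{t-k_g-\frac{d\,\mathrm{rk}W_g}{2}}=0$ for all $g\in\mu_d\setminus\{1\}$.
   Context: $\mu_d\subset\mathbb{C}^*$ is the group of $d$-th roots of unity. For $g\in\mu_d$ let $I_g=\{i: g^{a_i}\ne1\}$, $\mathrm{rk}W_g=|I_g|$, $k_g=-\sum_{i\in I_g}a_i$, and $\omega_g$ the image of $\omega$ in $\mathbb{C}[x_0,\dots,x_n]/(x_i)_{i\in I_g}$. $\mathrm{Jac}(\omega_g)$ denotes the Jacobian ring of $\omega_g$ (quotient of the polynomial ring in the variables $x_i$, $i\notin I_g$, by the partial derivatives of $\omega_g$), graded by $\deg x_i=a_i$; its pieces in negative degree are zero. *)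

From mathcomp Require Import all_boot all_algebra.
From mathcomp Require Import Rstruct complex.
From mathcomp Require Import mpoly.

Set Implicit Arguments.
Unset Strict Implicit.
Unset Printing Implicit Defensive.

Import GRing.Theory Num.Theory.
Local Open Scope ring_scope.

Definition CC : numClosedFieldType := (Rdefinitions.R)[i].

Definition wdeg (k : nat) (a : 'I_k -> nat) (m : 'X_{1..k}) : nat :=
  (\sum_(i < k) a i * m i)%N.

Definition wt_homog (k : nat) (a : 'I_k -> nat) (d : nat) (p : {mpoly CC[k]}) : Prop :=
  forall m, m \in msupp p -> wdeg a m = d.

Definition critical_point (k : nat) (p : {mpoly CC[k]}) (x : 'I_k -> CC) : Prop :=
  forall i : 'I_k, (mderiv i p).@[x] = 0.

Definition unique_crit_zero (k : nat) (p : {mpoly CC[k]}) : Prop :=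
  forall x : 'I_k -> CC, critical_point p x <-> (forall i, x i = 0).

Definition Ig (k : nat) (a : 'I_k -> nat) (g : CC) : {set 'I_k} :=
  [set i | g ^+ a i != 1].

Definition rkW (k : nat) (a : 'I_k -> nat) (g : CC) : nat := #|Ig a g|.

Definition kg (k : nat) (a : 'I_k -> nat) (g : CC) : int :=
  - ((\sum_(i in Ig a g) a i)%N)%:Z.

(* omega_g: image of omega modulo (x_i)_{i in I_g}, i.e. omega with x_i := 0
   for i in I_g, viewed as a polynomial in the remaining variables. *)
Definition omega_g (k : nat) (a : 'I_k -> nat) (g : CC) (w : {mpoly CC[k]})
  : {mpoly CC[k]} :=
  comp_mpoly [tuple (if i \in Ig a g then 0 else 'X_i) | i < k] w.

Definition vars_outside (k : nat) (J : {set 'I_k}) (p : {mpoly CC[k]}) : Prop :=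
  forall m, m \in msupp p -> forall i, i \in J -> m i = 0%N.

(* The graded piece of degree e (e rational; pieces in non-integral or negative
   degree are zero) of Jac(w) = CC[x_i, i notin J] / (d w / d x_j, j notin J)
   is zero: every weighted homogeneous polynomial of degree e in the variables
   x_i, i notin J, lies in the Jacobian ideal of w (in that polynomial ring). *)
Definition jac_piece_zero (k : nat) (a : 'I_k -> nat) (J : {set 'I_k})
  (w : {mpoly CC[k]}) (e : rat) : Prop :=
  forall p : {mpoly CC[k]},
    vars_outside J p ->
    (forall m, m \in msupp p -> (wdeg a m)%:R = e) ->
    exists c : 'I_k -> {mpoly CC[k]},
      (forall j, vars_outside J (c j)) /\
      p = \sum_(j < k | j \notin J) c j * mderiv j w.

From mathcomp Require Import all_boot all_algebra.
From mathcomp Require Import Rstruct complex.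
From mathcomp Require Import mpoly.
From mathcomp Require Import lra.

Set Implicit Arguments.
Unset Strict Implicit.
Unset Printing Implicit Defensive.

Import GRing.Theory Num.Theory.
Local Open Scope ring_scope.

(* The graded piece in question sits in negative degree.  Indeed the degree is
   t + sum_(i in I_g) a_i - d |I_g| / 2, and every i with a_i = 1 lies in I_g
   (as g <> 1), contributing d/2 - 1 to d |I_g| / 2 - sum a_i, while every
   other i in I_g contributes d/2 - a_i >= 0.  Hence
   d |I_g| / 2 - sum a_i >= |I| (d - 2) / 2 > t.  A weighted homogeneous
   polynomial of negative degree is zero, so it lies in any ideal. *)

Lemma mpoly_wdeg_lt0_eq0 (k : nat) (a : 'I_k -> nat) (e : rat)
    (p : {mpoly CC[k]}) :
  e < 0 -> (forall m, m \in msupp p -> (wdeg a m)%:R = e) -> p = 0.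
Proof.
move=> e_lt0 p_deg; apply/eqP; rewrite -msupp_eq0.
case E: (msupp p) => [|m s] //.
have := p_deg m; rewrite E mem_head => /(_ isT) wdeg_e.
by move: e_lt0; rewrite -wdeg_e ltrn0.
Qed.

Lemma jac_piece_zero_lt0 (k : nat) (a : 'I_k -> nat) (J : {set 'I_k})
    (w : {mpoly CC[k]}) (e : rat) :
  e < 0 -> jac_piece_zero a J w e.
Proof.
move=> e_lt0 p _ p_deg; exists (fun _ => 0); split=> [j m|].
  by rewrite msupp0.
rewrite (mpoly_wdeg_lt0_eq0 e_lt0 p_deg) big1 // => j _.
exact: mul0r.
Qed.

Lemma weight1_in_Ig (k : nat) (a : 'I_k -> nat) (g : CC) :
  g != 1 -> [set i | a i == 1%N] \subset Ig a g.
Proof. by move=> g1; apply/subsetP => i; rewrite !inE => /eqP ->; rewrite expr1. Qed.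

Lemma card_weight1_sum_le (T : finType) (a : T -> nat) (d : nat)
    (I S : {set T}) :
  I \subset S -> {in I, forall i, a i = 1%N} ->
  {in S, forall i, 2 * a i <= d}%N ->
  (#|I| * (d - 2) + 2 * \sum_(i in S) a i <= d * #|S|)%N.
Proof.
move=> IS a1 a_le.
have -> : (d * #|S| = \sum_(i in S) (d - 2 * a i) + 2 * \sum_(i in S) a i)%N.
  rewrite mulnC -sum_nat_const big_distrr -big_split /=.
  by apply: eq_bigr => i /a_le /subnK.
rewrite leq_add2r (big_setID I) /= (setIidPr IS).
apply: leq_trans (leq_addr _ _).
by rewrite -sum_nat_const; apply: leq_sum => i /a1 ->; rewrite muln1.
Qed.

Lemma jac_degree_lt0 (k : nat) (a : 'I_k -> nat) (d t : nat) (g : CC) :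
  (2 * t + 2 * \sum_(i in Ig a g) a i < d * rkW a g)%N ->
  t%:R - (kg a g)%:~R - (d * rkW a g)%:R / 2 < 0 :> rat.
Proof.
rewrite -(ltr_nat rat) /kg rmorphN /= !natrD !natrM.
have : (0 : rat) <= (\sum_(i in Ig a g) a i)%N%:R by [].
lra.
Qed.

Theorem lemma3p9 (n : nat) (a : 'I_n.+1 -> nat) (d : nat) (w : {mpoly CC[n.+1]}) :
  (forall i, 0 < a i)%N ->
  wt_homog a d w ->
  unique_crit_zero w ->
  let t := gcdn d (\sum_(i < n.+1) a i) in
  (forall i, 2 * a i <= d)%N ->
  let I := [set i : 'I_n.+1 | a i == 1%N] in
  (* |I| > 2t/(d-2), written without division *)
  (2 * t < #|I| * (d - 2))%N ->
  forall g : CC, g ^+ d = 1 -> g != 1 ->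
    jac_piece_zero a (Ig a g) (omega_g a g w)
      (t%:R - (kg a g)%:~R - (d * rkW a g)%:R / 2).
Proof.
move=> _ _ _ t a_le I hI g _ g1.
apply/jac_piece_zero_lt0/jac_degree_lt0.
have a1 : {in I, forall i, a i = 1%N} by move=> i; rewrite inE => /eqP.
have := card_weight1_sum_le (weight1_in_Ig a g1) a1 (in1W a_le).
apply: leq_trans; rewrite ltn_add2r.
exact: hI.
Qed.
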